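(* Let $(\alpha_0,\beta_0)\in\Delta_K$, $(\alpha_n,\beta_n)=T^n(\alpha_0,\beta_0)$, $\varepsilon_n=\varepsilon(\alpha_n,\beta_n)$. Let $\mathcal U=\sum_{i=0}^2(\bar{\bar e}_i,i^* )$ and $\mathcal U'=\sum_{i=0}^2(\bar{\bar 0},i^* )$, and for $n\ge0$ set $\gamma_n=\Theta_{\varepsilon_0}\cdots\Theta_{\varepsilon_{n-2}}\Theta_{\varepsilon_{n-1}}(\mathcal U)$ (with $\mathcal U$ viewed as a patch of $\mathscr S(\bar{\bar\nu}(\alpha_n,\beta_n))$) and $\gamma'_n=\Theta_{\varepsilon_0}\cdots\Theta_{\varepsilon_{n-1}}(\mathcal U')$ (with $\mathcal U'$ viewed as a patch of $\mathscr S'(\bar{\bar\nu}(\alpha_n,\beta_n))$). Then, identifying patches with their sets of unit squares: (1) $\gamma_n\setminus\gamma'_n=\mathcal U$ and $\gamma'_n\setminus\gamma_n=\mathcal U'$; (2) $\gamma_n\prec\gamma_{n+1}$ for all $n$; (3) $\bigcup_{n\ge0}\gamma_n\subset\mathscr S(\bar{\bar\nu}(\alpha_0,\beta_0))$.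
   Context: Let $K\subset\mathbb{R}$ be a real cubic number field, $N=N_{K/\mathbb{Q}}$ its norm. Fix $r=p/q$ with $p,q$ positive coprime integers and $3\nmid p$. Let $\Delta_K=\{(\alpha,\beta)\in K^2:\ 1,\alpha,\beta \text{ linearly independent over }\mathbb{Q},\ \alpha,\beta>0,\ \alpha+\beta<1\}$ and $Ind=\{(i,j): i,j\in\{0,1,2\},\ i\neq j\}$. Let $\Delta=\{(x,y)\in\mathbb{R}^2: x,y\ge 0,\ x+y\le 1\}$ and $\triangle(1,2)=\{(x,y)\in\Delta: x\ge y\}$, $\triangle(2,1)=\{x\le y\}$, $\triangle(0,1)=\{2x+y-1\le 0\}$, $\triangle(1,0)=\{2x+y-1\ge 0\}$, $\triangle(0,2)=\{x+2y-1\le0\}$, $\triangle(2,0)=\{x+2y-1\ge 0\}$ (all subsets of $\Delta$). Maps $T_{(i,j)}:\triangle(i,j)\to\Delta$: $T_{(1,2)}(x,y)=(\frac{x-y}{1-y},\frac{y}{1-y})$, $T_{(2,1)}(x,y)=(\frac{x}{1-x},\frac{y-x}{1-x})$, $T_{(0,1)}(x,y)=(\frac{x}{1-x},\frac{y}{1-x})$, $T_{(1,0)}(x,y)=(\frac{2x+y-1}{x+y},\frac{y}{x+y})$, $T_{(0,2)}(x,y)=(\frac{x}{1-y},\frac{y}{1-y})$, $T_{(2,0)}(x,y)=(\frac{x}{x+y},\frac{x+2y-1}{x+y})$. For $(\alpha,\beta)\in\Delta_K$ put $\gamma=1-\alpha-\beta$ and $v_{\{1,2\}}=\frac{\alpha^r\beta^r}{|N(\alpha)N(\beta)|}$,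 $v_{\{0,1\}}=\frac{\alpha^r\gamma^r}{|N(\alpha)N(\gamma)|}$, $v_{\{0,2\}}=\frac{\beta^r\gamma^r}{|N(\beta)N(\gamma)|}$; the maximum is attained at a unique pair $\{i_0,j_0\}$. $\varepsilon(\alpha,\beta)$ is the ordered pair $(i,j)\in Ind$ with $\{i,j\}=\{i_0,j_0\}$ and $(\alpha,\beta)\in\triangle(i,j)$, and $T(\alpha,\beta)=T_{\varepsilon(\alpha,\beta)}(\alpha,\beta)$ (a map $\Delta_K\to\Delta_K$). For $(i,j)\in Ind$, $M_{(i,j)}=(m_{k\ell})_{0\le k,\ell\le2}$ with $m_{k\ell}=1$ if $k=\ell$ or $(k,\ell)=(i,j)$, and $0$ otherwise; $L_{(i,j)}:=M_{(j,i)}$. For $(\alpha,\beta)\in\Delta_K$, $\bar{\bar\nu}(\alpha,\beta)={}^t(1-\alpha-\beta,\alpha,\beta)$. Let $\bar{\bar e}_0,\bar{\bar e}_1,\bar{\bar e}_2$ be the standard basis of $\mathbb{R}^3$. A unit square $(\bar{\bar x},i^* )$ ($\bar{\bar x}\in\mathbb{Z}^3$, $i\in\{0,1,2\}$) is the set $\{\bar{\bar x}+t\bar{\bar e}_j+u\bar{\bar e}_k: t,u\in[0,1]\}$ with $\{i,j,k\}=\{0,1,2\}$. For $\bar{\bar a}\in\mathbb{R}^3_{>0}$ with $\mathbb{Q}$-linearly independent coordinates, the stepped surfaces are $\mathscr S(\bar{\bar a})=\{(\bar{\bar x},i^* ): \bar{\bar x}\in\mathbb{Z}^3, i\in\{0,1,2\},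 \langle\bar{\bar x},\bar{\bar a}\rangle>0,\ \langle\bar{\bar x}-\bar{\bar e}_i,\bar{\bar a}\rangle\le0\}$ and $\mathscr S'(\bar{\bar a})=\{(\bar{\bar x},i^* ): \langle\bar{\bar x},\bar{\bar a}\rangle\ge0,\ \langle\bar{\bar x}-\bar{\bar e}_i,\bar{\bar a}\rangle<0\}$. A patch is a finite formal sum of distinct unit squares, identified with its set of squares; $\gamma\prec\delta$ means the set of squares of $\gamma$ is contained in that of $\delta$. For $(i,j)\in Ind$ the dual substitution $\Theta_{(i,j)}$ is defined on unit squares by $\Theta_{(i,j)}(\bar{\bar x},j^* )=(L_{(i,j)}^{-1}(\bar{\bar x}+\bar{\bar e}_i),i^* )+(L_{(i,j)}^{-1}\bar{\bar x},j^* )$ and $\Theta_{(i,j)}(\bar{\bar x},k^* )=(L_{(i,j)}^{-1}\bar{\bar x},k^* )$ for $k\neq j$, and extended additively to formal sums. *)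

From HB Require Import structures.
From mathcomp Require Import all_boot all_order all_algebra.
From mathcomp Require Import all_classical all_reals all_analysis.
Set Implicit Arguments. Unset Strict Implicit. Unset Printing Implicit Defensive.
Import Order.TTheory GRing.Theory Num.Theory.
Local Open Scope classical_set_scope.
Local Open Scope ring_scope.

Section Defs.
Variable R : realType.

(* The real cubic field K = Q(theta), theta a real root of an irreducible
   cubic over Q.  Elements of K are the reals a + b theta + c theta^2. *)
Definition inK (theta x : R) : Prop :=
  exists a b c : rat, x = ratr a + ratr b * theta + ratr c * theta ^+ 2.

(* N_{K/Q}(x) = det of the Q-linear map "multiplication by x" on K, in the
   Q-basis 1, theta, theta^2 (coordinates are unique since deg theta = 3). *)
Definition normK (theta x : R) : rat :=
  xget 0 [set d : rat | exists M : 'M[rat]_3,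
     (forall j : 'I_3, x * theta ^+ j = \sum_(i < 3) ratr (M i j) * theta ^+ i)
     /\ d = \det M].

Definition inDeltaK (theta : R) (ab : R * R) : Prop :=
  let: (a, b) := ab in
  [/\ inK theta a /\ inK theta b,
      (forall u v w : rat, ratr u + ratr v * a + ratr w * b = 0 ->
         [/\ u = 0, v = 0 & w = 0]),
      0 < a, 0 < b & a + b < 1].

(* Ind = {(i,j) : i <> j} in {0,1,2} *)
Inductive Ind := I12 | I21 | I01 | I10 | I02 | I20.

Definition indi (e : Ind) : 'I_3 :=
  match e with I12 => inord 1 | I21 => inord 2 | I01 => inord 0
             | I10 => inord 1 | I02 => inord 0 | I20 => inord 2 end.
Definition indj (e : Ind) : 'I_3 :=
  match e with I12 => inord 2 | I21 => inord 1 | I01 => inord 1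
             | I10 => inord 0 | I02 => inord 2 | I20 => inord 0 end.

Definition inDelta (x y : R) : bool := [&& 0 <= x, 0 <= y & x + y <= 1].
Definition tri (e : Ind) (x y : R) : bool :=
  inDelta x y &&
  match e with
  | I12 => y <= x | I21 => x <= y
  | I01 => 2 * x + y - 1 <= 0 | I10 => 0 <= 2 * x + y - 1
  | I02 => x + 2 * y - 1 <= 0 | I20 => 0 <= x + 2 * y - 1 end.

Definition Tij (e : Ind) (xy : R * R) : R * R :=
  let: (x, y) := xy in
  match e with
  | I12 => ((x - y) / (1 - y), y / (1 - y))
  | I21 => (x / (1 - x), (y - x) / (1 - x))
  | I01 => (x / (1 - x), y / (1 - x))
  | I10 => ((2 * x + y - 1) / (x + y), y / (x + y))
  | I02 => (x / (1 - y), y / (1 - y))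
  | I20 => (x / (x + y), (x + 2 * y - 1) / (x + y)) end.

Definition vv (theta r a b : R) : R :=
  (a `^ r * b `^ r) / (`|ratr (normK theta a)| * `|ratr (normK theta b)|).

(* epsilon(alpha,beta): the unordered pair {i0,j0} maximizing v (unique on
   Delta_K; ties are broken arbitrarily here), then oriented by the triangle
   containing (alpha,beta). *)
Definition epsf (theta r : R) (ab : R * R) : Ind :=
  let: (a, b) := ab in
  let c := 1 - a - b in
  let v12 := vv theta r a b in
  let v01 := vv theta r a c in
  let v02 := vv theta r b c in
  if (v01 <= v12) && (v02 <= v12) then (if tri I12 a b then I12 else I21)
  else if v02 <= v01 then (if tri I01 a b then I01 else I10)
  else (if tri I02 a b then I02 else I20).

Definition Tmap (theta r : R) (ab : R * R) : R * R := Tij (epsf theta r ab) ab.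

Definition nu (a b : R) : 'cV[R]_3 :=
  \col_(k < 3) (if val k == 0%N then 1 - a - b else if val k == 1%N then a else b).

End Defs.

Definition ee (i : 'I_3) : 'cV[int]_3 := delta_mx i 0.

Definition Mij (i j : 'I_3) : 'M[int]_3 :=
  \matrix_(k < 3, l < 3) (if (k == l) || ((k == i) && (l == j)) then 1 else 0).
Definition Lmat (e : Ind) : 'M[int]_3 := Mij (indj e) (indi e).

Definition square := ('cV[int]_3 * 'I_3)%type.
Definition patch := set square.

Definition ipr {R : realType} (x : 'cV[int]_3) (a : 'cV[R]_3) : R :=
  \sum_(k < 3) (x k 0)%:~R * a k 0.

Definition stepped {R : realType} (a : 'cV[R]_3) : patch :=
  [set s | 0 < ipr s.1 a /\ ipr (s.1 - ee s.2) a <= 0].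
Definition stepped' {R : realType} (a : 'cV[R]_3) : patch :=
  [set s | 0 <= ipr s.1 a /\ ipr (s.1 - ee s.2) a < 0].

Definition ThetaSq (e : Ind) (s : square) : patch :=
  let: (x, k) := s in
  let Li := invmx (Lmat e) in
  if k == indj e then [set (Li *m (x + ee (indi e)), indi e); (Li *m x, indj e)]
  else [set (Li *m x, k)].

Definition Theta (e : Ind) (P : patch) : patch := \bigcup_(s in P) ThetaSq e s.

(* thetas eps n P = Theta_{eps 0} ( ... (Theta_{eps (n-1)} P)) *)
Fixpoint thetas (eps : nat -> Ind) (n : nat) (P : patch) : patch :=
  match n with
  | 0 => P
  | n'.+1 => thetas eps n' (Theta (eps n') P)
  end.

Definition Upatch : patch := [set (ee i, i) | i in [set: 'I_3]].
Definition U'patch : patch := [set ((0 : 'cV[int]_3), i) | i in [set: 'I_3]].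

From HB Require Import structures.
From mathcomp Require Import all_boot all_order all_algebra.
From mathcomp Require Import all_classical all_reals all_analysis.
From mathcomp Require Import ring lra.
Import Order.TTheory GRing.Theory Num.Theory.
Local Open Scope classical_set_scope.
Local Open Scope ring_scope.
Set Implicit Arguments. Unset Strict Implicit. Unset Printing Implicit Defensive.

(* Write nu_n for the normal vector nu (alpha_n, beta_n).  A step of T inside the
   triangle eps_n reads nu_n = lam_n * tL_(eps_n) nu_(n+1) with lam_n > 0, and the
   rational independence of 1, alpha_0, beta_0, which is inherited along the orbit,
   keeps every nu_n in the open simplex.  As Theta_e is adjoint to tL_e for the
   pairing <x, nu>, it maps S(nu_(n+1)) into S(nu_n) and S'(nu_(n+1)) into
   S'(nu_n); hence gamma_n lies in S(nu_0) and gamma'_n in S'(nu_0).  Moreover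
   U <= Theta_e U, U' <= Theta_e U', Theta_e U <= U + Theta_e U' and
   Theta_e U' <= U' + Theta_e U, which gives the monotonicity and, since U misses
   S' and U' misses S, the two set differences.  Only the fact that
   (alpha_n, beta_n) lies in the triangle eps_n is used, not the maximality of
   the v_(i,j), nor the hypotheses on K and r. *)

Lemma indi_neq_indj e : indi e != indj e.
Proof. by case: e; rewrite -val_eqE /= !inordK. Qed.

Lemma ord3_ind (P : 'I_3 -> Prop) :
  P (inord 0) -> P (inord 1) -> P (inord 2) -> forall k, P k.
Proof.
move=> P0 P1 P2 k; rewrite -[k]inord_val.
by case: k => [[|[|[|m]]] km].
Qed.

Section RatFree.
Variables (R : realType) (n : nat).
Implicit Types (v w : 'cV[R]_n) (i j : 'I_n).

Lemma sum_indicator (F : 'I_n -> R) i : \sum_k (k == i)%:R * F k = F i.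
Proof.
rewrite (bigD1 i) //= eqxx mul1r big1 ?addr0 // => k /negbTE ->.
by rewrite mul0r.
Qed.

Definition rat_free v :=
  forall c : 'I_n -> rat, \sum_k ratr (c k) * v k 0 = 0 -> forall k, c k = 0.

Definition transvection i j v : 'cV[R]_n := v + v j 0 *: delta_mx i 0.

Lemma rat_freeZ (lam : R) v : lam != 0 -> rat_free v -> rat_free (lam *: v).
Proof.
move=> lam_neq0 free_v c; under eq_bigr do rewrite mxE mulrCA.
by rewrite -mulr_sumr => /eqP; rewrite mulf_eq0 (negbTE lam_neq0) => /eqP /free_v.
Qed.

Lemma rat_free_neq v i j : rat_free v -> i != j -> v i 0 != v j 0.
Proof.
move=> free_v neq_ij; apply/eqP => eq_vij.
have sum0 : \sum_k ratr ((k == i)%:R - (k == j)%:R : rat) * v k 0 = 0.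
  rewrite (eq_bigr (fun k => (k == i)%:R * v k 0 - (k == j)%:R * v k 0)).
    by rewrite sumrB !sum_indicator eq_vij subrr.
  by move=> k _; rewrite rmorphB !rmorph_nat mulrBl.
have /eqP := free_v _ sum0 i.
by rewrite eqxx (negbTE neq_ij) subr0 oner_eq0.
Qed.

Lemma rat_free_inv_transvection v i j :
  i != j -> rat_free v -> rat_free (v - v j 0 *: delta_mx i 0).
Proof.
move=> neq_ij free_v c sum0.
(* the same rational relation, rewritten as a relation among the entries of [v] *)
pose c' k := c k - (k == j)%:R * c i.
have c'0 : forall k, c' k = 0.
  apply: free_v; rewrite -{}[RHS]sum0.
  rewrite (eq_bigr (fun k =>
    ratr (c k) * v k 0 - (k == j)%:R * (ratr (c i) * v k 0))); last first.
    by move=> k _; rewrite rmorphB rmorphM rmorph_nat mulrBl mulrA.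
  rewrite [RHS](eq_bigr (fun k =>
    ratr (c k) * v k 0 - (k == i)%:R * (ratr (c k) * v j 0))); last first.
    by move=> k _; rewrite !mxE andbT; ring.
  by rewrite !sumrB !sum_indicator.
have ci0 : c i = 0 by have := c'0 i; rewrite /c' /= (negbTE neq_ij) mul0r subr0.
by move=> k; have := c'0 k; rewrite /c' /= ci0 mulr0 subr0.
Qed.

Lemma transvection_preimage (lam : R) v i j :
  i != j -> 0 < lam -> (forall k, 0 < v k 0) -> rat_free v -> v j 0 <= v i 0 ->
  let w := lam^-1 *: (v - v j 0 *: delta_mx i 0) in
  [/\ forall k, 0 < w k 0, rat_free w & v = lam *: transvection i j w].
Proof.
move=> neq_ij lam_gt0 v_gt0 free_v le_vji w; split.
- move=> k; rewrite !mxE andbT mulr_gt0 ?invr_gt0 //.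
  have [-> | _] := eqVneq k i; last by rewrite mulr0 subr0.
  by rewrite mulr1 subr_gt0 lt_neqAle le_vji eq_sym rat_free_neq.
- by apply: rat_freeZ (rat_free_inv_transvection neq_ij free_v); rewrite invr_eq0 gt_eqF.
- apply/matrixP => k l; rewrite ord1 !mxE !andbT [j == i]eq_sym (negbTE neq_ij) mulr0 subr0.
  by field; rewrite gt_eqF.
Qed.
End RatFree.

Section Nu.
Variable R : realType.
Implicit Types a b : R.

Lemma nuE a b :
  [/\ nu a b (inord 0) 0 = 1 - a - b, nu a b (inord 1) 0 = a & nu a b (inord 2) 0 = b].
Proof. by rewrite !mxE; split; rewrite -[\val _]/(nat_of_ord _) inordK. Qed.

Lemma tri_nuE e a b :
  tri e a b = inDelta a b && (nu a b (indj e) 0 <= nu a b (indi e) 0).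
Proof.
have [n0 n1 n2] := nuE a b.
by case: e; rewrite /tri /= ?n0 ?n1 ?n2; congr (_ && _); apply/idP/idP => ?; lra.
Qed.

Lemma nu_Tij e a b : nu a b (indj e) 0 < 1 ->
  nu (Tij e (a, b)).1 (Tij e (a, b)).2 =
  (1 - nu a b (indj e) 0)^-1 *: (nu a b - nu a b (indj e) 0 *: delta_mx (indi e) 0).
Proof.
have [n0 n1 n2] := nuE a b.
case: e; rewrite /= ?n0 ?n1 ?n2 => lt1; apply/matrixP => + l; rewrite ord1;
  apply: ord3_ind; rewrite !mxE -!val_eqE /= !inordK //=; field; lra.
Qed.

Lemma nu_gt0 a b : 0 < a -> 0 < b -> a + b < 1 -> forall k, 0 < nu a b k 0.
Proof. by have [n0 n1 n2] := nuE a b => ? ? ?; apply: ord3_ind; rewrite ?n0 ?n1 ?n2; lra. Qed.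

Lemma nu_lt1 a b : (forall k, 0 < nu a b k 0) -> forall k, nu a b k 0 < 1.
Proof.
have [n0 n1 n2] := nuE a b => nu_gt0.
have := nu_gt0 (inord 0); have := nu_gt0 (inord 1); have := nu_gt0 (inord 2).
by rewrite n0 n1 n2 => ? ? ?; apply: ord3_ind; rewrite ?n0 ?n1 ?n2; lra.
Qed.

Lemma inDelta_nu a b : (forall k, 0 < nu a b k 0) -> inDelta a b.
Proof.
have [n0 n1 n2] := nuE a b => nu_gt0.
have := nu_gt0 (inord 0); have := nu_gt0 (inord 1); have := nu_gt0 (inord 2).
by rewrite n0 n1 n2 => *; apply/and3P; split; lra.
Qed.

Lemma sum_ord3 (F : 'I_3 -> R) :
  \sum_k F k = F (inord 0) + F (inord 1) + F (inord 2).
Proof.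
rewrite !big_ord_recl big_ord0 addr0 addrA.
by congr (F _ + F _ + F _); apply: val_inj; rewrite /= inordK.
Qed.

Lemma rat_free_nu a b :
  (forall u v w : rat, ratr u + ratr v * a + ratr w * b = 0 -> [/\ u = 0, v = 0 & w = 0]) ->
  rat_free (nu a b).
Proof.
move=> indep c; have [n0 n1 n2] := nuE a b.
rewrite sum_ord3 n0 n1 n2 => sum0.
have [c0 c10 c20] : [/\ c (inord 0) = 0, c (inord 1) - c (inord 0) = 0
                     & c (inord 2) - c (inord 0) = 0].
  apply: indep; rewrite -[RHS]sum0 !rmorphB; ring.
by apply: ord3_ind; rewrite // -[LHS]subr0 -c0 ?c10 ?c20.
Qed.

Lemma Tij_step e a b :
  (forall k, 0 < nu a b k 0) -> rat_free (nu a b) -> tri e a b ->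
  let v := nu (Tij e (a, b)).1 (Tij e (a, b)).2 in
  [/\ forall k, 0 < v k 0, rat_free v &
      nu a b = (1 - nu a b (indj e) 0) *: transvection (indi e) (indj e) v].
Proof.
move=> nu_gt0 free_nu tri_e /=.
rewrite nu_Tij ?nu_lt1 //; apply: transvection_preimage => //; first exact: indi_neq_indj.
  by rewrite subr_gt0 nu_lt1.
by move: tri_e; rewrite tri_nuE => /andP[].
Qed.

Lemma tri_epsf theta r a b : inDelta a b -> tri (epsf theta r (a, b)) a b.
Proof.
move=> inD; rewrite /epsf.
have tri_or e1 e2 : (~~ tri e1 a b -> tri e2 a b) ->
    tri (if tri e1 a b then e1 else e2) a b by case: ifP => // /negbT ntri; apply.
by case: ifP => _; [|case: ifP => _]; apply: tri_or; rewrite /tri inD /= -ltNge => ?; lra.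
Qed.

Lemma Tmap_step theta r (p : R * R) :
  (forall k, 0 < nu p.1 p.2 k 0) -> rat_free (nu p.1 p.2) ->
  let e := epsf theta r p in
  let q := Tmap theta r p in
  [/\ forall k, 0 < nu q.1 q.2 k 0, rat_free (nu q.1 q.2) &
      nu p.1 p.2 = (1 - nu p.1 p.2 (indj e) 0) *: transvection (indi e) (indj e) (nu q.1 q.2)].
Proof. by case: p => a b nu_gt0 free_nu; apply: Tij_step => //; apply/tri_epsf/inDelta_nu. Qed.
End Nu.

Lemma LmatE e : Lmat e = 1%:M + delta_mx (indj e) (indi e).
Proof.
apply/matrixP => k l; rewrite !mxE.
have [->|_] /= := eqVneq k l; last by case: ifP; rewrite add0r.
have [->|//] := eqVneq l (indj e); rewrite eq_sym (negbTE (indi_neq_indj e)).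
by rewrite addr0.
Qed.

Lemma invLmatE e : invmx (Lmat e) = 1%:M - delta_mx (indj e) (indi e).
Proof.
have LL : Lmat e *m (1%:M - delta_mx (indj e) (indi e)) = 1%:M.
  rewrite LmatE mulmxBr !mulmxDl !mul1mx mulmx1 mul_delta_mx_cond.
  by rewrite (negbTE (indi_neq_indj e)) mulr0n addr0 addrK.
have [L_unit _] := mulmx1_unit LL.
by rewrite -[RHS](mulKmx L_unit) LL mulmx1.
Qed.

Lemma invLmat_mul e (x : 'cV[int]_3) :
  invmx (Lmat e) *m x = x - x (indi e) 0 *: ee (indj e).
Proof.
rewrite invLmatE mulmxBl mul1mx; congr (_ - _).
apply/matrixP => k l; rewrite !mxE (bigD1 (indi e)) //= big1 ?addr0.
  by rewrite !mxE eqxx ord1 /= andbT mulrC.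
by move=> m /negbTE; rewrite !mxE => ->; rewrite andbF mul0r.
Qed.

Lemma invLmat_ee e k :
  invmx (Lmat e) *m ee k = if k == indi e then ee k - ee (indj e) else ee k.
Proof.
rewrite invLmat_mul /ee mxE andbT eq_sym.
by case: eqP => _; rewrite ?scale1r // scale0r subr0.
Qed.

Lemma invLmat_ee_indj e : invmx (Lmat e) *m ee (indj e) = ee (indj e).
Proof. by rewrite invLmat_ee eq_sym (negbTE (indi_neq_indj e)). Qed.

Section InnerProduct.
Variable R : realType.
Implicit Types (a b : 'cV[R]_3) (x y : 'cV[int]_3).

Lemma ipr_addl x y a : ipr (x + y) a = ipr x a + ipr y a.
Proof. by rewrite /ipr -big_split; apply: eq_bigr => k _; rewrite mxE intrD mulrDl. Qed.

Lemma ipr_scalel (c : int) x a : ipr (c *: x) a = c%:~R * ipr x a.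
Proof. by rewrite /ipr mulr_sumr; apply: eq_bigr => k _; rewrite mxE intrM mulrA. Qed.

Lemma ipr_subl x y a : ipr (x - y) a = ipr x a - ipr y a.
Proof. by rewrite ipr_addl -scaleN1r ipr_scalel mulN1r. Qed.

Lemma ipr0l a : ipr 0 a = 0.
Proof. by rewrite -(scale0r 0) ipr_scalel mul0r. Qed.

Lemma ipr_eel k a : ipr (ee k) a = a k 0.
Proof.
rewrite /ipr (bigD1 k) //= big1 ?addr0; first by rewrite !mxE eqxx mul1r.
by move=> m /negbTE; rewrite !mxE => ->; rewrite mul0r.
Qed.

Lemma ipr_addr x a b : ipr x (a + b) = ipr x a + ipr x b.
Proof. by rewrite /ipr -big_split; apply: eq_bigr => k _; rewrite mxE mulrDr. Qed.

Lemma ipr_scaler x (c : R) a : ipr x (c *: a) = c * ipr x a.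
Proof. by rewrite /ipr mulr_sumr; apply: eq_bigr => k _; rewrite mxE mulrCA. Qed.

Lemma ipr_deltar x i : ipr x (delta_mx i 0 : 'cV[R]_3) = (x i 0)%:~R.
Proof.
rewrite /ipr (bigD1 i) //= big1 ?addr0; first by rewrite !mxE eqxx mulr1.
by move=> m /negbTE; rewrite !mxE => ->; rewrite mulr0.
Qed.

(* [transvection (indi e) (indj e)] is multiplication by the transpose of [Lmat e],
   so the dual substitution is its adjoint for [ipr]. *)
Lemma ipr_invLmat_transvection e y (lam : R) a :
  ipr (invmx (Lmat e) *m y) (lam *: transvection (indi e) (indj e) a) =
  lam * ipr y a.
Proof.
rewrite invLmat_mul ipr_subl ipr_scalel ipr_eel !ipr_scaler ipr_addr ipr_scaler.
rewrite ipr_deltar !mxE andbT [indj e == _]eq_sym (negbTE (indi_neq_indj e)).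
by rewrite mulr0n mulr0 addr0; ring.
Qed.

Definition stepped_with (Q : R -> R -> Prop) a : set square :=
  [set s | Q (ipr s.1 a) (ipr (s.1 - ee s.2) a)].

Lemma Theta_stepped_with (Q : R -> R -> Prop) e (lam : R) a :
  0 < lam -> (forall k, 0 <= a k 0) ->
  (forall c u w, 0 < c -> Q u w -> Q (c * u) (c * w)) ->
  (forall u w u' w', u <= u' -> w' <= w -> Q u w -> Q u' w') ->
  Theta e (stepped_with Q a) `<=`
  stepped_with Q (lam *: transvection (indi e) (indj e) a).
Proof.
move=> lam_gt0 a_ge0 Qscale Qmono t [[x k] /= Qx].
set b := lam *: _.
have ipr_invLmat y : ipr (invmx (Lmat e) *m y) b = lam * ipr y a.
  exact: ipr_invLmat_transvection.
have b_ge k' : lam * a k' 0 <= b k' 0.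
  rewrite !mxE andbT ler_pM2l // lerDl.
  by rewrite mulr_ge0 ?a_ge0 ?ler0n.
have Qlam := Qscale _ _ _ lam_gt0 Qx.
have invLmat_x : stepped_with Q b (invmx (Lmat e) *m x, k).
  rewrite /stepped_with /= ipr_subl ipr_invLmat ipr_eel; apply: Qmono Qlam => //.
  by rewrite ipr_subl ipr_eel mulrBr lerD2l lerN2 b_ge.
rewrite /ThetaSq; case: eqP => [kj | _]; last by move=> ->; apply: invLmat_x.
case=> ->; last by rewrite -kj; apply: invLmat_x.
rewrite /stepped_with /= ipr_subl !ipr_invLmat ipr_addl !ipr_eel /b !mxE eqxx andbT mulr1.
move: Qlam; rewrite /= ipr_subl ipr_eel kj => Qlam.
by apply: Qmono Qlam; have := a_ge0 (indi e); nra.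
Qed.

End InnerProduct.

Lemma ThetaS e (A B : set square) : A `<=` B -> Theta e A `<=` Theta e B.
Proof. by move=> AB t [s As Ht]; exists s => //; apply: AB. Qed.

Lemma ThetaU e (A B : set square) : Theta e (A `|` B) = Theta e A `|` Theta e B.
Proof. exact: bigcup_setU. Qed.

Lemma Upatch_sub_Theta e : Upatch `<=` Theta e Upatch.
Proof.
move=> t [k _ <-].
have [kj|nkj] := eqVneq k (indj e).
  exists (ee (indj e), indj e); first by exists (indj e).
  by rewrite /ThetaSq eqxx invLmat_ee_indj kj; right.
have [ki|nki] := eqVneq k (indi e).
  exists (ee (indj e), indj e); first by exists (indj e).
  rewrite /ThetaSq eqxx mulmxDr invLmat_ee_indj invLmat_ee eqxx ki; left.
  by rewrite addrC subrK.
exists (ee k, k); first by exists k.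
by rewrite /ThetaSq (negbTE nkj) invLmat_ee (negbTE nki).
Qed.

Lemma U'patch_sub_Theta e : U'patch `<=` Theta e U'patch.
Proof.
move=> t [k _ <-]; exists (0, k); first by exists k.
by rewrite /ThetaSq mulmx0; case: eqP => [->|_] //; right.
Qed.

Lemma Theta_Upatch_sub e : Theta e Upatch `<=` Upatch `|` Theta e U'patch.
Proof.
move=> t [_ [k _ <-]]; rewrite /ThetaSq.
case: eqP => [->|_].
  case=> ->; left; last by exists (indj e); rewrite ?invLmat_ee_indj.
  by exists (indi e); rewrite // mulmxDr invLmat_ee_indj invLmat_ee eqxx addrC subrK.
move=> ->; rewrite invLmat_ee; case: eqP => [->|_]; last by left; exists k.
right; exists (0, indj e); first by exists (indj e).
by rewrite /ThetaSq eqxx add0r invLmat_ee eqxx; left.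
Qed.

Lemma Theta_U'patch_sub e : Theta e U'patch `<=` U'patch `|` Theta e Upatch.
Proof.
move=> t [_ [k _ <-]]; rewrite /ThetaSq mulmx0.
case: (k =P indj e) => [_|_]; last by move=> ->; left; exists k.
case=> ->; last by left; exists (indj e).
right; exists (ee (indi e), indi e); first by exists (indi e).
by rewrite /ThetaSq (negbTE (indi_neq_indj e)) add0r invLmat_ee eqxx.
Qed.

Section Thetas.
Variable eps : nat -> Ind.

Lemma thetasS n (A B : set square) : A `<=` B -> thetas eps n A `<=` thetas eps n B.
Proof. by elim: n A B => [|n IH] A B AB //=; apply/IH/ThetaS. Qed.

Lemma thetasU n (A B : set square) :
  thetas eps n (A `|` B) = thetas eps n A `|` thetas eps n B.
Proof. by elim: n A B => [|n IH] A B //=; rewrite ThetaU IH. Qed.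

Lemma thetas_sub_chain (A : nat -> set square) n (P : set square) :
  (forall k, Theta (eps k) (A k.+1) `<=` A k) ->
  P `<=` A n -> thetas eps n P `<=` A 0%N.
Proof.
move=> ThetaA; elim: n P => [|n IH] P PA //=.
by apply: IH; apply: subset_trans (ThetaA n); apply: ThetaS.
Qed.

Section Growing.
Variable P : set square.
Hypothesis P_sub_Theta : forall e, P `<=` Theta e P.

Lemma thetas_subSn n : thetas eps n P `<=` thetas eps n.+1 P.
Proof. exact/thetasS/P_sub_Theta. Qed.

Lemma sub_thetas n : P `<=` thetas eps n P.
Proof. by elim: n => [|n IH] // s /IH /thetas_subSn. Qed.
End Growing.

Lemma thetas_setD_sub (P P' : set square) :
  (forall e, P' `<=` Theta e P') -> (forall e, Theta e P `<=` P `|` Theta e P') ->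
  forall n, thetas eps n P `\` thetas eps n P' `<=` P.
Proof.
move=> P'_sub Theta_P; elim=> [|n IH] s [PSs nP's] //=.
have := thetasS (Theta_P (eps n)) PSs; rewrite thetasU => -[Ps | /nP's //].
by apply: IH; split => // /(thetas_subSn P'_sub).
Qed.

End Thetas.

Section SteppedSurface.
Variable R : realType.
Implicit Types a : 'cV[R]_3.

Lemma Theta_stepped e (lam : R) a : 0 < lam -> (forall k, 0 <= a k 0) ->
  Theta e (stepped a) `<=` stepped (lam *: transvection (indi e) (indj e) a).
Proof.
move=> lam_gt0 a_ge0.
apply: (@Theta_stepped_with _ (fun u w => 0 < u /\ w <= 0)) => //.
  by move=> c u w c_gt0 [u_gt0 w_le0]; split; nra.
by move=> u w u' w' le_u le_w [u_gt0 w_le0]; split; lra.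
Qed.

Lemma Theta_stepped' e (lam : R) a : 0 < lam -> (forall k, 0 <= a k 0) ->
  Theta e (stepped' a) `<=` stepped' (lam *: transvection (indi e) (indj e) a).
Proof.
move=> lam_gt0 a_ge0.
apply: (@Theta_stepped_with _ (fun u w => 0 <= u /\ w < 0)) => //.
  by move=> c u w c_gt0 [u_ge0 w_lt0]; split; nra.
by move=> u w u' w' le_u le_w [u_ge0 w_lt0]; split; lra.
Qed.

Lemma Upatch_sub_stepped a : (forall k, 0 < a k 0) -> Upatch `<=` stepped a.
Proof. by move=> a_gt0 _ [i _ <-]; rewrite /stepped /= subrr ipr0l ipr_eel. Qed.

Lemma U'patch_sub_stepped' a : (forall k, 0 < a k 0) -> U'patch `<=` stepped' a.
Proof.
move=> a_gt0 _ [i _ <-]; rewrite /stepped' /= sub0r -scaleN1r ipr_scalel.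
by rewrite ipr0l ipr_eel mulN1r oppr_lt0.
Qed.

Lemma Upatch_sub_setC_stepped' a : Upatch `<=` ~` stepped' a.
Proof. by move=> _ [i _ <-]; rewrite /stepped' /= subrr ipr0l ltxx => -[]. Qed.

Lemma U'patch_sub_setC_stepped a : U'patch `<=` ~` stepped a.
Proof. by move=> _ [i _ <-]; rewrite /stepped /= ipr0l ltxx => -[]. Qed.

End SteppedSurface.

Section DualSubstitution.
Variables (R : realType) (eps : nat -> Ind) (v : nat -> 'cV[R]_3) (lam : nat -> R).
Hypotheses (lam_gt0 : forall n, 0 < lam n) (v_gt0 : forall n k, 0 < v n k 0).
Hypothesis v_rec :
  forall n, v n = lam n *: transvection (indi (eps n)) (indj (eps n)) (v n.+1).

Lemma thetas_Upatch_sub_stepped n : thetas eps n Upatch `<=` stepped (v 0).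
Proof.
apply: (thetas_sub_chain (A := fun n => stepped (v n))); last exact: Upatch_sub_stepped.
by move=> k; rewrite [X in _ `<=` stepped X]v_rec; apply: Theta_stepped => // j; apply: ltW.
Qed.

Lemma thetas_U'patch_sub_stepped' n : thetas eps n U'patch `<=` stepped' (v 0).
Proof.
apply: (thetas_sub_chain (A := fun n => stepped' (v n))); last exact: U'patch_sub_stepped'.
by move=> k; rewrite [X in _ `<=` stepped' X]v_rec; apply: Theta_stepped' => // j; apply: ltW.
Qed.

Theorem dual_substitution :
  let gam n := thetas eps n Upatch in
  let gam' n := thetas eps n U'patch in
  [/\ (forall n, gam n `\` gam' n = Upatch /\ gam' n `\` gam n = U'patch),
      (forall n, gam n `<=` gam n.+1)
    & \bigcup_(n in [set: nat]) gam n `<=` stepped (v 0)].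
Proof.
move=> gam gam'; split=> [n|n|s [n _ /thetas_Upatch_sub_stepped //]].
- split; apply/seteqP; split.
  + exact: thetas_setD_sub U'patch_sub_Theta Theta_Upatch_sub n.
  + move=> s Us; split; first exact: sub_thetas Upatch_sub_Theta n s Us.
    by move/thetas_U'patch_sub_stepped'; apply: Upatch_sub_setC_stepped' Us.
  + exact: thetas_setD_sub Upatch_sub_Theta Theta_U'patch_sub n.
  + move=> s U's; split; first exact: sub_thetas U'patch_sub_Theta n s U's.
    by move/thetas_Upatch_sub_stepped; apply: U'patch_sub_setC_stepped U's.
- exact: (@thetas_subSn eps _ Upatch_sub_Theta n).
Qed.

End DualSubstitution.

Theorem corollary5p8 (R : realType) (Pmin : {poly rat}) (theta : R)
  (p q : nat) (alpha0 beta0 : R) :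
  size Pmin = 4%N -> irreducible_poly Pmin -> root (map_poly ratr Pmin) theta ->
  (0 < p)%N -> (0 < q)%N -> coprime p q -> ~~ (3 %| p)%N ->
  inDeltaK theta (alpha0, beta0) ->
  let r : R := p%:R / q%:R in
  let orb := fun n : nat => iter n (Tmap theta r) (alpha0, beta0) in
  let eps := fun n : nat => epsf theta r (orb n) in
  let gam := fun n : nat => thetas eps n Upatch in
  let gam' := fun n : nat => thetas eps n U'patch in
  [/\ (forall n : nat, gam n `\` gam' n = Upatch /\ gam' n `\` gam n = U'patch),
      (forall n : nat, gam n `<=` gam n.+1)
    & \bigcup_(n in [set: nat]) gam n `<=` stepped (nu alpha0 beta0)].
Proof.
move=> _ _ _ _ _ _ _ [_ indep a0_gt0 b0_gt0 ab0_lt1] r orb eps.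
pose v n := nu (orb n).1 (orb n).2.
have orb_inv n : (forall k, 0 < v n k 0) /\ rat_free (v n).
  elim: n => [|n [v_gt0 free_v]]; first by split; [exact: nu_gt0 | exact: rat_free_nu].
  by have [] := Tmap_step theta r v_gt0 free_v.
apply: (@dual_substitution R eps v (fun n => 1 - v n (indj (eps n)) 0)) => n.
- by rewrite subr_gt0; apply: nu_lt1; case: (orb_inv n).
- by case: (orb_inv n).
- by case: (orb_inv n) => v_gt0 free_v; case: (Tmap_step theta r v_gt0 free_v).
Qed.
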